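(* For every $V\ge 0$, $T>0$ and $\bar P>0$, the capacity region $\mathcal{C}(V,T,\bar P)$ of the UAV-enabled two-user broadcast channel is symmetric with respect to the line $r_1=r_2$; that is, $(r_1,r_2)\in\mathcal{C}(V,T,\bar P)$ if and only if $(r_2,r_1)\in\mathcal{C}(V,T,\bar P)$.
   Context: Fix $D>0$, $H>0$, $\beta_0>0$, $\bar P>0$. Two ground users GU 1 and GU 2 are at horizontal positions $x_1=-D/2$ and $x_2=D/2$. For a UAV horizontal position $x\in\mathbb{R}$ (the UAV flies at constant altitude $H$), the normalized channel gains are $h_k(x)=\beta_0/((x-x_k)^2+H^2)$, $k\in\{1,2\}$. Given a flight duration $T>0$ and maximum speed $V\ge 0$, a feasible trajectory is a function $x:[0,T]\to\mathbb{R}$ with $|\dot x(t)|\le V$ for all $t\in[0,T]$ (i.e. $x$ is $V$-Lipschitz), and a feasible power allocation is a pair of measurable functions $p_1,p_2:[0,T]\to[0,\infty)$ with $p_1(t)+p_2(t)\le\bar P$ for all $t$. For such $x,p$, let $\mathcal{C}(x,p)$ be the set of rate pairs $(r_1,r_2)$ with $r_1,r_2\ge 0$ and $r_1\le\frac1T\int_0^T\log_2(1+p_1(t)h_1(x(t)))\,dt$, $r_2\le\frac1T\int_0^T\log_2(1+p_2(t)h_2(x(t)))\,dt$, $r_1+r_2\le\frac1T\int_0^T\log_2(1+p_1(t)h_1(x(t))+p_2(t)h_2(x(t)))\,dt$. The capacity region is $\mathcal{C}(V,T,\bar P)=\bigcup\mathcal{C}(x,p)$, the union over all feasible trajectories $x$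 and feasible power allocations $p$. *)

From HB Require Import structures.
From mathcomp Require Import all_boot all_order all_algebra.
From mathcomp Require Import all_classical all_reals all_analysis.
Set Implicit Arguments. Unset Strict Implicit. Unset Printing Implicit Defensive.
Import Order.TTheory GRing.Theory Num.Theory.
Import numFieldNormedType.Exports.
Local Open Scope classical_set_scope.
Local Open Scope ring_scope.

Definition log2 {R : realType} (y : R) : R := ln y / ln 2.

(* positions of GU 1 (k = false) and GU 2 (k = true) *)
Definition gu_pos {R : realType} (D : R) (k : bool) : R :=
  if k then D / 2 else - (D / 2).

Definition gain {R : realType} (D H beta0 : R) (k : bool) (x : R) : R :=
  beta0 / ((x - gu_pos D k) ^+ 2 + H ^+ 2).

Definition feasible_traj {R : realType} (V T : R) (x : R -> R) : Prop :=
  forall s t, s \in `[0, T] -> t \in `[0, T] -> `|x s - x t| <= V * `|s - t|.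

Definition feasible_power {R : realType} (T Pbar : R) (p1 p2 : R -> R) : Prop :=
  [/\ measurable_fun `[0, T] p1, measurable_fun `[0, T] p2 &
      forall t, t \in `[0, T] -> [/\ 0 <= p1 t, 0 <= p2 t & p1 t + p2 t <= Pbar]].

Definition avg_int {R : realType} (T : R) (f : R -> R) : \bar R :=
  ((1 / T)%:E * \int[lebesgue_measure]_(t in `[0%R, T]%classic) (f t)%:E)%E.

Definition rate_set {R : realType} (D H beta0 T : R) (x p1 p2 : R -> R)
  (r : R * R) : Prop :=
  let h1 := gain D H beta0 false in
  let h2 := gain D H beta0 true in
  [/\ 0 <= r.1, 0 <= r.2,
      (r.1%:E <= avg_int T (fun t => log2 (1 + p1 t * h1 (x t))))%E,
      (r.2%:E <= avg_int T (fun t => log2 (1 + p2 t * h2 (x t))))%E &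
      ((r.1 + r.2)%:E <=
         avg_int T (fun t => log2 (1 + p1 t * h1 (x t) + p2 t * h2 (x t))))%E].

Definition capacity_region {R : realType} (D H beta0 V T Pbar : R)
  (r : R * R) : Prop :=
  exists (x p1 p2 : R -> R),
    [/\ feasible_traj V T x, feasible_power T Pbar p1 p2 &
        rate_set D H beta0 T x p1 p2 r].

From HB Require Import structures.
From mathcomp Require Import all_boot all_order all_algebra.
From mathcomp Require Import all_classical all_reals all_analysis.
Import Order.TTheory GRing.Theory Num.Theory.
Local Open Scope ring_scope.

(* The reflection x |-> -x of the flight line exchanges the two users' positions,
   hence their channel gains; reflecting the trajectory and exchanging the power
   allocations therefore turns every achievable pair (r1, r2) into (r2, r1). *)

Lemma gainN (R : realType) (D H beta0 : R) (k : bool) (x : R) :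
  gain D H beta0 k (- x) = gain D H beta0 (~~ k) x.
Proof.
rewrite /gain /gu_pos; case: k => /=.
- by rewrite opprK -opprD sqrrN.
- by rewrite opprK -[in RHS]sqrrN opprB [D / 2 - x]addrC.
Qed.

Lemma feasible_trajN (R : realType) (V T : R) (x : R -> R) :
  feasible_traj V T x -> feasible_traj V T (fun t => - x t).
Proof. by move=> hx s t hs ht; rewrite -opprD normrN; apply: hx. Qed.

Lemma feasible_power_swap (R : realType) (T Pbar : R) (p1 p2 : R -> R) :
  feasible_power T Pbar p1 p2 -> feasible_power T Pbar p2 p1.
Proof.
move=> [m1 m2 hp]; split=> // t /hp[p1_ge0 p2_ge0 sum_le].
by split=> //; rewrite addrC.
Qed.

Lemma rate_setN_swap (R : realType) (D H beta0 T : R) (x p1 p2 : R -> R)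
    (r1 r2 : R) :
  rate_set D H beta0 T x p1 p2 (r1, r2) ->
  rate_set D H beta0 T (fun t => - x t) p2 p1 (r2, r1).
Proof.
move=> [/= r1_ge0 r2_ge0 r1_le r2_le sum_le]; split=> //=.
- by under eq_fun do rewrite gainN /=.
- by under eq_fun do rewrite gainN /=.
- under eq_fun do rewrite !gainN /= -addrA [X in 1 + X]addrC addrA.
  by rewrite addrC.
Qed.

Lemma capacity_region_swap (R : realType) (D H beta0 V T Pbar r1 r2 : R) :
  capacity_region D H beta0 V T Pbar (r1, r2) ->
  capacity_region D H beta0 V T Pbar (r2, r1).
Proof.
move=> [x [p1 [p2 [hx hp hr]]]].
exists (fun t => - x t), p2, p1; split.
- exact: feasible_trajN.
- exact: feasible_power_swap.
- exact: rate_setN_swap.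
Qed.

Theorem lemma1 (R : realType) (D H beta0 Pbar V T : R)
  (hD : 0 < D) (hH : 0 < H) (hbeta0 : 0 < beta0) (hPbar : 0 < Pbar)
  (hV : 0 <= V) (hT : 0 < T) (r1 r2 : R) :
  capacity_region D H beta0 V T Pbar (r1, r2) <->
  capacity_region D H beta0 V T Pbar (r2, r1).
Proof. by split; apply: capacity_region_swap. Qed.
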